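(* For every $G^*\in\mathcal{G}^*_{d,c}(n)$, \[ \lvert S_n G^* \cap \phi^{-1}(L) \rvert \geq \frac{2}{dn}\, \lvert S_n G^* \rvert, \] where $L=\{x\in\{0,1\}^{nd/2}: \lvert x\rvert\ge T_c-1\}$ and $T_c=c\cdot\frac{dn}{2}\cdot\frac{d-1}{d+1}$.
   Context: Fix $0<c<1$, $n,d$ with $dn$ even, and $T_{\max}=\binom d2\frac n3$. $\mathcal{G}^*_{d,c}(n)$ is the set of $d$-regular graphs on nodes $\{1,\dots,n\}$ with at least $c\cdot T_{\max}$ triangles, where at each node the $d$ incident edges carry distinct labels $1,\dots,d$. Configuration ordering: for edges $e=(i_1j_1)$, $f=(i_2j_2)$ with $i_1<j_1$, $i_2<j_2$, $e\prec f$ if $i_1<i_2$, or $i_1=i_2$ and the label of $e$ at $i_1$ is smaller than that of $f$. With $e_1\prec\dots\prec e_{nd/2}$ the edges and $G^*[k]$ the subgraph on $e_1,\dots,e_k$, $\phi(G^* )\in\{0,1\}^{nd/2}$ has $\phi(G^* )(k)=1$ iff $e_k$ lies in a triangle of $G^*[k]$. For $x\in\{0,1\}^{nd/2}$, $\lvert x\rvert=\sum_j x(j)$. The symmetric group $S_n$ acts on $\mathcal{G}^*_{d,c}(n)$ by permuting node labels (keeping edge labels): $G^*_\sigma$ is the result of applying $\sigma$, and $S_nG^*=\{G^*_\sigma:\sigma\in S_n\}$ is the orbit. *)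

From HB Require Import structures.
From mathcomp Require Import all_boot all_order all_algebra fingroup perm.
Set Implicit Arguments. Unset Strict Implicit. Unset Printing Implicit Defensive.
Import Order.TTheory GRing.Theory Num.Theory.

(* Nodes are 'I_n (node i stands for i+1), edge labels are 'I_d (label k
   stands for k+1).  A labelled graph G* is encoded by its half-edge pairing:
   G (i,k) = (j,l) means that the edge incident to node i with label k at i
   goes to node j, where it carries label l. *)
Definition config (n d : nat) := {ffun 'I_n * 'I_d -> 'I_n * 'I_d}.

Section Defs.
Variables n d : nat.
Implicit Types G : config n d.

(* G encodes a d-regular simple graph with distinct labels 1..d at each node *)
Definition valid_config G : bool :=
  [forall h, (G (G h) == h) && ((G h).1 != h.1)] &&
  [forall h, forall h', ((h.1 == h'.1) && ((G h).1 == (G h').1)) ==> (h == h')].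

Definition adj G (a b : 'I_n) : bool := [exists k, (G (a, k)).1 == b].

Definition is_triangle G (t : {set 'I_n}) : bool :=
  (#|t| == 3) && [forall a in t, forall b in t, (a != b) ==> adj G a b].

Definition num_triangles G : nat := #|[set t | is_triangle G t]|.

(* An edge {i,j} with i<j is represented by the half-edge (i, label at i). *)
Definition edge_rep G (h : 'I_n * 'I_d) : bool := h.1 < (G h).1.

Definition hlt (h h' : 'I_n * 'I_d) : bool :=
  (h.1 < h'.1) || ((h.1 == h'.1) && (h.2 < h'.2)).
Definition hle (h h' : 'I_n * 'I_d) : bool := (h == h') || hlt h h'.

Definition edges G : seq ('I_n * 'I_d) :=
  sort hle [seq h <- enum [set: 'I_n * 'I_d] | edge_rep G h].

(* the edge {a,b} is an edge of G[k], where e_k = h *)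
Definition in_prefix G (h : 'I_n * 'I_d) (a b : 'I_n) : bool :=
  [exists h', [&& edge_rep G h', hle h' h &
     ((h'.1 == a) && ((G h').1 == b)) || ((h'.1 == b) && ((G h').1 == a))]].

Definition in_prefix_triangle G (h : 'I_n * 'I_d) : bool :=
  let i := h.1 in let j := (G h).1 in
  [exists w : 'I_n, [&& w != i, w != j, in_prefix G h i w & in_prefix G h j w]].

Definition phi G : seq bool := [seq in_prefix_triangle G h | h <- edges G].

Definition weight (x : seq bool) : nat := count id x.

Definition act_config G (s : {perm 'I_n}) : config n d :=
  [ffun h : 'I_n * 'I_d => let h' := G ((s^-1)%g h.1, h.2) in (s h'.1, h'.2)].

Definition orbit_config G : {set config n d} :=
  [set act_config G s | s : {perm 'I_n}].

End Defs.

Local Open Scope ring_scope.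

Definition Tmax {R : realFieldType} (n d : nat) : R :=
  ('C(d, 2))%:R * n%:R / 3%:R.

Definition Tc {R : realFieldType} (c : R) (n d : nat) : R :=
  c * ((d * n)%:R / 2%:R) * ((d%:R - 1) / (d%:R + 1)).

Definition in_Gstar {R : realFieldType} (c : R) (n d : nat) (G : config n d) : bool :=
  valid_config G && (c * Tmax n d <= (num_triangles G)%:R).

(* Relabel G* by a uniformly random permutation s.  An edge {u, v} of G*
   contributes to |phi| exactly when some common neighbour w of u and v is
   ranked by s before both u and v: the prefix G[k] ending with {u, v} contains
   {w, u} and {w, v} only then.  If u and v have m <= d - 1 common neighbours,
   each of these m + 2 vertices is equally likely to come first, so the edge
   contributes with probability m / (m + 2) >= m / (d + 1).  Summing over the
   edges, whose values of m add up to 3T, the mean of |phi| over S_n is at least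
   3T / (d + 1) >= T_c.  Since |phi| <= dn/2, a reverse Markov inequality shows
   that a fraction at least 2/(dn) of the permutations give |phi| >= T_c - 1,
   and every element of the orbit is hit by equally many permutations. *)

From HB Require Import structures.
From mathcomp Require Import all_boot all_order all_algebra fingroup perm action.
From mathcomp Require Import ring lra.
Import Order.TTheory GRing.Theory Num.Theory.
Set Implicit Arguments. Unset Strict Implicit. Unset Printing Implicit Defensive.

Lemma sum_card_exchange (I J : finType) (R : I -> J -> bool) :
  \sum_i #|[set j | R i j]| = \sum_j #|[set i | R i j]|.
Proof.
under eq_bigr do rewrite -sum1dep_card big_mkcond /=.
by rewrite exchange_big; apply: eq_bigr => j _; rewrite -sum1dep_card [RHS]big_mkcond.
Qed.

Lemma card_dep_pairs (I J : finType) (P : pred I) (Q : I -> pred J) k :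
  (forall i, P i -> #|[set j | Q i j]| = k) ->
  #|[set p : I * J | P p.1 && Q p.1 p.2]| = #|[set i | P i]| * k.
Proof.
move=> Qk; rewrite -!sum1dep_card -(pair_big_dep P Q (fun _ _ => 1)) big_distrl /=.
by apply: eq_bigr => i Pi; rewrite mul1n sum1dep_card Qk.
Qed.

Lemma card_distinct_triples (T : finType) (A : {set T}) :
  #|[set x : T * T * T |
     [&& x.1.1 \in A, x.1.2 \in A :\ x.1.1 & x.2 \in A :\ x.1.1 :\ x.1.2]]| =
  #|A| * #|A|.-1 * #|A|.-2.
Proof.
pose Q1 (a b : T) := b \in A :\ a.
pose Q2 (ab : T * T) (c : T) := c \in A :\ ab.1 :\ ab.2.
have card_Q1 a : a \in A -> #|[set b | Q1 a b]| = #|A|.-1.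
  by move=> aA; rewrite (cardsD1 a A) aA; apply: eq_card => b; rewrite inE.
have card_Q2 ab : (ab.1 \in A) && Q1 ab.1 ab.2 -> #|[set c | Q2 ab c]| = #|A|.-2.
  case: ab => a b /andP [aA]; rewrite /Q1 /= => bAa.
  rewrite (cardsD1 a A) aA (cardsD1 b (A :\ a)) bAa.
  by apply: eq_card => c; rewrite inE.
have card_A : #|[set a | a \in A]| = #|A| by apply: eq_card => a; rewrite inE.
rewrite -{1}card_A -(card_dep_pairs card_Q1) -(card_dep_pairs card_Q2).
by apply: eq_card => x; rewrite /Q1 /Q2 !inE andbA.
Qed.

Lemma set3_distinct (T : finType) (A : {set T}) a b c : #|A| = 3 ->
  a \in A -> b \in A :\ a -> c \in A :\ a :\ b -> [set a; b; c] = A.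
Proof.
move=> A3 aA; rewrite !inE => /andP [ba bA] /and3P [cb ca cA].
apply/eqP; rewrite eqEcard A3 -setUA cardsU1 cards2 !inE ![a == _]eq_sym [b == c]eq_sym.
rewrite (negbTE ba) (negbTE ca) (negbTE cb).
by rewrite andbT; apply/subsetP => x; rewrite !inE => /or3P [] /eqP ->.
Qed.

Section FirstInPerm.
Variables (n : nat) (X : {set 'I_n}).
Implicit Types (s : {perm 'I_n}) (x y : 'I_n).

Definition first_in s x := (x \in X) && [forall y in X, (y != x) ==> (s x < s y)].

Lemma first_in_uniq s x x' : first_in s x -> first_in s x' -> x = x'.
Proof.
case/andP=> xX /forall_inP sx_min /andP [x'X /forall_inP sx'_min].
apply/eqP; apply: contraT => x_neq_x'.
have := ltn_trans (implyP (sx_min _ x'X) _) (implyP (sx'_min _ xX) _).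
by rewrite ltnn eq_sym x_neq_x'; apply.
Qed.

Lemma first_in_exists s : X != set0 -> exists x, first_in s x.
Proof.
case/set0Pn => x0 x0X; have [x xX x_min] := arg_minnP (fun y => s y) x0X.
exists x; apply/andP; split=> //; apply/forall_inP => y yX; apply/implyP => y_neq_x.
by rewrite ltn_neqAle x_min // andbT; apply: contra y_neq_x => /eqP/val_inj/perm_inj ->.
Qed.

Lemma first_in_tperm s x x' :
  x' \in X -> first_in s x -> first_in (tperm x x' * s)%g x'.
Proof.
move=> x'X /andP [xX /forall_inP sx_min]; rewrite /first_in x'X.
apply/forall_inP => y yX; apply/implyP => y_neq_x'; rewrite !permM tpermR.
case: tpermP => [y_eq_x | y_eq_x' | y_neq_x _].
- by apply: (implyP (sx_min x' x'X)); rewrite -y_eq_x eq_sym.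
- by rewrite y_eq_x' eqxx in y_neq_x'.
- by apply: (implyP (sx_min y yX)); apply/eqP.
Qed.

Lemma card_first_in_eq x x' : x \in X -> x' \in X ->
  #|[set s | first_in s x]| = #|[set s | first_in s x']|.
Proof.
suff card_le z z' : z' \in X -> #|[set s | first_in s z]| <= #|[set s | first_in s z']|.
  by move=> xX x'X; apply/eqP; rewrite eqn_leq !card_le.
move=> z'X; rewrite -(card_imset _ (mulgI (tperm z z'))); apply: subset_leq_card.
by apply/subsetP => _ /imsetP [s sz ->]; rewrite inE first_in_tperm //; rewrite inE in sz.
Qed.

Lemma card_exists_first_in (V : {set 'I_n}) :
  #|[set s | [exists w in V, first_in s w]]| =
  \sum_(w in V) #|[set s | first_in s w]|.
Proof.
under [RHS]eq_bigr do rewrite -sum1dep_card big_mkcond /=.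
rewrite exchange_big -sum1dep_card big_mkcond /=; apply: eq_bigr => s _.
case: existsP => [[w0 /andP [w0V sw0]] | no_first].
  rewrite (bigD1 w0) //= sw0 big1 // => w /andP [_ w_neq_w0].
  by case: ifP => // sw; rewrite (first_in_uniq sw sw0) eqxx in w_neq_w0.
by rewrite big1 // => w wV; case: ifP => // sw; case: no_first; exists w; rewrite wV.
Qed.

Lemma card_first_in_sub (W : {set 'I_n}) : W \subset X ->
  #|[set s | [exists w in W, first_in s w]]| * #|X| = #|W| * #|{perm 'I_n}|.
Proof.
move=> WX; have [X0 | Xn0] := eqVneq X set0.
  by move: WX; rewrite X0 subset0 => /eqP ->; rewrite cards0 muln0.
have /set0Pn [x0 x0X] := Xn0; set c := #|[set s | first_in s x0]|.
have sum_c (V : {set 'I_n}) :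
    V \subset X -> \sum_(w in V) #|[set s | first_in s w]| = #|V| * c.
  move=> VX; rewrite -sum_nat_const; apply: eq_bigr => w /(subsetP VX) wX.
  exact: card_first_in_eq.
have card_perm : #|{perm 'I_n}| = #|X| * c.
  rewrite -sum_c // -card_exists_first_in; apply: eq_card => s; rewrite inE.
  have [x sx] := first_in_exists s Xn0.
  by apply/esym/exists_inP; exists x => //; case/andP: sx.
by rewrite card_exists_first_in sum_c // card_perm mulnAC mulnA.
Qed.
End FirstInPerm.

Section ActionFibres.
Variables (aT : finGroupType) (D : {group aT}) (rT : finType) (to : action D rT).
Variables (G : {group aT}) (x : rT).
Hypothesis sGD : G \subset D.
Local Open Scope group_scope.

Lemma card_act_pred (P : pred rT) :
  #|[set a in G | P (to x a)]| =
  (#|[set y in orbit to G x | P y]| * #|'C_G[x | to]|)%N.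
Proof.
rewrite -sum1dep_card (partition_big (to x) (mem [set y in orbit to G x | P y])) /=;
  last by move=> a /andP [Ga Pa]; rewrite inE mem_orbit.
rewrite -sum_nat_const; apply: eq_bigr => _ /setIdP [/orbitP [a Ga <-] Pxa].
rewrite sum1dep_card -(card_rcoset 'C_G[x | to] a) -amove_act //; apply: eq_card => b.
by rewrite !inE -andbA; apply: andb_id2l => _; apply: andb_idl => /eqP ->.
Qed.

End ActionFibres.

Section ReverseMarkov.
Local Open Scope ring_scope.

Lemma reverse_markov (R : realFieldType) (I : finType) (w : I -> R) (M t : R) :
  1 <= M -> (forall i, 0 <= w i <= M) -> #|I|%:R * t <= \sum_i w i ->
  #|I|%:R <= M * #|[set i | t - 1 <= w i]|%:R.
Proof.
move=> M_ge1 w_bnd mean_ge.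
have [t_le1 | t_gt1] := lerP t 1.
  have -> : [set i | t - 1 <= w i] = setT.
    by apply/setP => i; rewrite !inE; case/andP: (w_bnd i); lra.
  by rewrite cardsT ler_peMl.
set S := [set i | t - 1 <= w i].
have excess : \sum_i (w i - (t - 1)) <= \sum_(i in S) M.
  rewrite (bigID (mem S)) /= -[X in _ <= X]addr0; apply: lerD.
    by apply: ler_sum => i _; case/andP: (w_bnd i); lra.
  by apply: sumr_le0 => i; rewrite inE; lra.
have sum_M : \sum_(i in S) M = M * #|S|%:R by rewrite sumr_const mulr_natr.
have sum_t : \sum_(i : I) (t - 1) = #|I|%:R * (t - 1) by rewrite sumr_const mulr_natl.
move: excess; rewrite sumrB sum_M sum_t; lra.
Qed.

End ReverseMarkov.

Section ConfigAction.
Variables n d : nat.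
Implicit Types (G : config n d) (s : {perm 'I_n}).

Lemma act_configE G s a k :
  act_config G s (s a, k) = (s (G (a, k)).1, (G (a, k)).2).
Proof. by rewrite ffunE /= permK. Qed.

Lemma act_config1 : (@act_config n d)^~ 1%g =1 id.
Proof.
by move=> G; apply/ffunP => -[a k]; rewrite ffunE /= invg1 !perm1 -surjective_pairing.
Qed.

Lemma act_configM G : act_morph (@act_config n d) G.
Proof. by move=> s t; apply/ffunP => -[a k]; rewrite !ffunE /= invMg !permM. Qed.

Definition config_action := TotalAction act_config1 act_configM.

Lemma orbit_configE G : orbit_config G = orbit config_action setT G.
Proof. by apply/setP => H; apply/imsetP/imsetP => -[s _ ->]; exists s. Qed.

Lemma act_config_invol G s : involutive G -> involutive (act_config G s).
Proof.
move=> G_invol [b k]; rewrite -(permKV s b) !act_configE -surjective_pairing.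
by rewrite G_invol.
Qed.

Lemma adj_act_config G s a b : adj (act_config G s) (s a) (s b) = adj G a b.
Proof. by apply: eq_existsb => k; rewrite act_configE /= (inj_eq perm_inj). Qed.

End ConfigAction.

Lemma valid_configP n d (G : config n d) :
  valid_config G -> involutive G /\ forall h, (G h).1 != h.1.
Proof. by case/andP => /forallP G_ok _; split=> h; case/andP: (G_ok h) => /eqP. Qed.

Definition common_nbrs n d (G : config n d) (h : 'I_n * 'I_d) :=
  [set w | adj G w h.1 && adj G w (G h).1].

Lemma weight_phi n d (H : config n d) :
  weight (phi H) = #|[set h | edge_rep H h && in_prefix_triangle H h]|.
Proof.
rewrite /weight /phi count_map /edges (seq.permP (permEl (perm_sort _ _))).
rewrite -sum1_count big_filter_cond big_enum_cond -sum1_card [RHS]big_mkcond.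
by rewrite [LHS]big_mkcond; apply: eq_bigr => h _; rewrite !inE.
Qed.

Lemma hle_fst n d (h' h : 'I_n * 'I_d) : hle h' h -> h'.1 <= h.1.
Proof. by case/orP => [/eqP -> // | /orP [/ltnW // | /andP [/eqP -> _]]]. Qed.

Section PrefixTriangles.
Variables (n d : nat) (H : config n d).
Implicit Types (h : 'I_n * 'I_d) (a b : 'I_n).
Hypothesis H_invol : involutive H.

Lemma adj_sym a b : adj H a b -> adj H b a.
Proof.
case/existsP => k /eqP ab; apply/existsP; exists (H (a, k)).2.
by rewrite -ab -surjective_pairing H_invol.
Qed.

Lemma in_prefix_sym h a b : in_prefix H h a b = in_prefix H h b a.
Proof. by apply: eq_existsb => h'; rewrite orbC. Qed.

Lemma in_prefix_adj h a b : in_prefix H h a b -> adj H a b.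
Proof.
case/existsP => h' /and3P [_ _ /orP [] /andP [/eqP <- /eqP <-]]; last apply: adj_sym;
  by apply/existsP; exists h'.2; rewrite -surjective_pairing.
Qed.

Lemma in_prefix_min (h : 'I_n * 'I_d) a b : in_prefix H h a b -> minn a b <= h.1.
Proof.
case/existsP => h' /and3P [h'_rep /hle_fst h'_le /orP [] /andP [/eqP <- /eqP <-]];
  by rewrite ?[minn (H h').1 _]minnC (minn_idPl (ltnW h'_rep)).
Qed.

Lemma in_prefix_lt h a b : adj H a b -> a < b -> a < h.1 -> in_prefix H h a b.
Proof.
case/existsP => k /eqP ab a_lt_b a_lt_h; apply/existsP; exists (a, k).
by rewrite /edge_rep /hle /hlt /= ab a_lt_b a_lt_h !eqxx orbT.
Qed.

(* An edge {w, x} precedes e_k = (i, _) in the configuration ordering only if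
   min(w, x) <= i, so a triangle of G[k] through e_k = {i, j}, i < j, has its
   third vertex below i. *)
Lemma in_prefix_triangleE h : edge_rep H h ->
  in_prefix_triangle H h = [exists w in common_nbrs H h, w < h.1].
Proof.
rewrite /edge_rep => i_lt_j; apply/existsP/exists_inP.
  case=> w /and4P [w_neq_i _ iw jw]; exists w.
    by rewrite inE (adj_sym (in_prefix_adj iw)) (adj_sym (in_prefix_adj jw)).
  have := in_prefix_min jw; rewrite geq_min leqNgt i_lt_j /= => w_le_i.
  by rewrite ltn_neqAle w_neq_i.
case=> w; rewrite inE => /andP [wi wj] w_lt_i; have w_lt_j := ltn_trans w_lt_i i_lt_j.
exists w; rewrite -!val_eqE /= (ltn_eqF w_lt_i) (ltn_eqF w_lt_j) !(in_prefix_sym h _ w).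
by rewrite !in_prefix_lt.
Qed.

Lemma weight_phiE : weight (phi H) =
  #|[set h | edge_rep H h && [exists w in common_nbrs H h, w < h.1]]|.
Proof.
rewrite weight_phi; apply: eq_card => h; rewrite !inE.
by apply: andb_id2l => /in_prefix_triangleE.
Qed.

Lemma weight_phi_le : 2 * weight (phi H) <= n * d.
Proof.
set E := [set h | edge_rep H h].
have weight_le : weight (phi H) <= #|E|.
  by rewrite weight_phi; apply/subset_leq_card/subsetP => h; rewrite !inE => /andP [].
have disj : E :&: H @: E = set0.
  apply/setP => h; rewrite !inE; apply/negbTE/andP => -[h_rep /imsetP [h' h'_rep h_eq]].
  move: h_rep h'_rep; rewrite inE /edge_rep h_eq H_invol => lt1 lt2.
  by have := ltn_trans lt1 lt2; rewrite ltnn.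
have := cardsUI E (H @: E); rewrite disj cards0 addn0 (card_imset _ (can_inj H_invol)).
move=> card_EU; rewrite mul2n -addnn; apply: leq_trans (leq_add weight_le weight_le) _.
by rewrite -card_EU; apply: leq_trans (max_card _) _; rewrite card_prod !card_ord.
Qed.

End PrefixTriangles.

Section RelabelledTriangles.
Variables (n d : nat) (G : config n d).
Hypotheses (G_invol : involutive G) (G_loopless : forall h, (G h).1 != h.1).
Implicit Types (g : 'I_n * 'I_d) (s : {perm 'I_n}).

Definition closes_triangle s g :=
  (s g.1 < s (G g).1) && [exists w in common_nbrs G g, s w < s g.1].

Definition common_nbr_first g := [set s : {perm 'I_n} |
  [exists w in common_nbrs G g, (s w < s g.1) && (s w < s (G g).1)]].

Definition ends_common_nbrs g := g.1 |: ((G g).1 |: common_nbrs G g).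

Lemma adj_irr a : ~~ adj G a a.
Proof. by apply/existsP => -[k /eqP aa]; have := G_loopless (a, k); rewrite aa eqxx. Qed.

Lemma ends_notin_common_nbrs g :
  (g.1 \notin common_nbrs G g) && ((G g).1 \notin common_nbrs G g).
Proof. by rewrite !inE !(negbTE (adj_irr _)) andbF. Qed.

Lemma common_nbrs_flip g : common_nbrs G (G g) = common_nbrs G g.
Proof. by apply/setP => w; rewrite !inE G_invol andbC. Qed.

Lemma card_common_nbrs_lt g : #|common_nbrs G g| < d.
Proof.
pose N := [set (G (g.1, k)).1 | k : 'I_d].
have sub : common_nbrs G g \proper N.
  rewrite properE; apply/andP; split.
    apply/subsetP => w; rewrite inE => /andP [/(adj_sym G_invol) /existsP [k /eqP <-] _].
    exact: imset_f.
  have v_in : (G g).1 \in N by apply/imsetP; exists g.2; rewrite // -surjective_pairing.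
  have /andP [_ v_nin] := ends_notin_common_nbrs g.
  by apply: contraNN v_nin => /subsetP; apply.
by apply: leq_trans (proper_card sub) _; rewrite -[d]card_ord leq_imset_card.
Qed.

Lemma weight_phi_act s : weight (phi (act_config G s)) = #|[set g | closes_triangle s g]|.
Proof.
pose f g := (s g.1, g.2).
have f_inj : injective f by move=> [a k] [b l] [/perm_inj -> ->].
rewrite (weight_phiE (act_config_invol s G_invol)) -(card_preimset _ f_inj).
apply: eq_card => -[a k]; rewrite !inE /edge_rep /f /= act_configE /=.
apply: andb_id2l => _; set H := act_config G s.
have nbrsE w : (s w \in common_nbrs H (s a, k)) = (w \in common_nbrs G (a, k)).
  by rewrite !inE act_configE /= !adj_act_config.
apply/exists_inP/exists_inP => [[w'] | [w w_nbr w_lt]].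
  by rewrite -(permKV s w') nbrsE => w_nbr w_lt; exists (s^-1 w')%g.
by exists (s w); rewrite ?nbrsE.
Qed.

Lemma card_closes_triangle_pair g :
  #|[set s | closes_triangle s g]| + #|[set s | closes_triangle s (G g)]| =
  #|common_nbr_first g|.
Proof.
have -> : common_nbr_first g =
    [set s | closes_triangle s g] :|: [set s | closes_triangle s (G g)].
  apply/setP => s; rewrite !inE /closes_triangle G_invol common_nbrs_flip.
  case: ltngtP => [u_lt_v | v_lt_u | /val_inj /perm_inj uv]; rewrite /= ?orbF.
  - apply: eq_existsb => w /=; rewrite andbA; apply: andb_idr.
    by case/andP => _ /ltn_trans; apply.
  - apply: eq_existsb => w /=; rewrite (andbC (s w < s g.1)) andbA; apply: andb_idr.
    by case/andP => _ /ltn_trans; apply.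
  - by have := G_loopless g; rewrite uv eqxx.
rewrite -cardsUI; have -> : [set s | closes_triangle s g] :&:
    [set s | closes_triangle s (G g)] = set0.
  apply/setP => s; rewrite !inE /closes_triangle G_invol.
  by case: (ltngtP (s g.1) (s (G g).1)); rewrite ?andbF.
by rewrite cards0 addn0.
Qed.

Lemma common_nbr_firstE g : common_nbr_first g =
  [set s | [exists w in common_nbrs G g, first_in (ends_common_nbrs g) s w]].
Proof.
have /andP [u_nin v_nin] := ends_notin_common_nbrs g.
have nbr_neq w y : w \in common_nbrs G g -> y \notin common_nbrs G g -> w != y.
  by move=> w_nbr; apply: contraNneq => <-.
apply/setP => s; rewrite !inE; apply/exists_inP/exists_inP.
  case=> w0 w0_nbr /andP [w0_lt_u w0_lt_v].
  have [|x /[dup] /andP [x_in /forall_inP x_min] x_first] :=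
    first_in_exists (X := ends_common_nbrs g) s.
    by apply/set0Pn; exists g.1; rewrite !inE eqxx.
  have w0_in : w0 \in ends_common_nbrs g by rewrite !in_setU1 w0_nbr !orbT.
  exists x => //; move: x_in (x_min w0 w0_in); rewrite !inE.
  case/or3P => [/eqP -> | /eqP -> | //].
    by rewrite (nbr_neq _ _ w0_nbr u_nin) ltnNge (ltnW w0_lt_u).
  by rewrite (nbr_neq _ _ w0_nbr v_nin) ltnNge (ltnW w0_lt_v).
case=> w w_nbr /andP [_ /forall_inP w_min]; exists w => //.
have end_lt y : y \notin common_nbrs G g -> y \in ends_common_nbrs g -> s w < s y.
  by move=> y_nin y_in; apply: (implyP (w_min y y_in)); rewrite eq_sym nbr_neq.
by rewrite !end_lt // !inE eqxx ?orbT.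
Qed.

Lemma card_ends_common_nbrs g : #|ends_common_nbrs g| = (#|common_nbrs G g|).+2.
Proof.
have /andP [u_nin v_nin] := ends_notin_common_nbrs g.
by rewrite !cardsU1 in_setU1 negb_or eq_sym G_loopless u_nin v_nin.
Qed.

Lemma card_common_nbr_first g :
  #|common_nbr_first g| * (#|common_nbrs G g|).+2 = #|common_nbrs G g| * #|{perm 'I_n}|.
Proof.
rewrite common_nbr_firstE -card_ends_common_nbrs card_first_in_sub //.
by apply/subsetP => w w_nbr; rewrite !in_setU1 w_nbr !orbT.
Qed.

Lemma sum_weight_phi_act :
  2 * \sum_s weight (phi (act_config G s)) = \sum_g #|common_nbr_first g|.
Proof.
under eq_bigr do rewrite weight_phi_act.
rewrite sum_card_exchange mul2n -addnn [X in _ + X](reindex_inj (can_inj G_invol)).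
by rewrite -big_split; apply: eq_bigr => g _; apply: card_closes_triangle_pair.
Qed.

Definition adj_triples := [set x : 'I_n * 'I_n * 'I_n |
  [&& adj G x.1.1 x.1.2, adj G x.2 x.1.1 & adj G x.2 x.1.2]].

Lemma triangles_le_adj_triples : 6 * num_triangles G <= #|adj_triples|.
Proof.
pose vertices (x : 'I_n * 'I_n * 'I_n) := [set x.1.1; x.1.2; x.2].
rewrite -sum1_card (partition_big vertices xpredT) //= (bigID (is_triangle G)) /=.
rewrite /num_triangles -sum1dep_card big_distrr /=; apply: leq_trans (leq_addr _ _).
apply: leq_sum => t /andP [/eqP t3 /forall_inP t_adj]; rewrite muln1 sum1dep_card.
have <- : #|t| * #|t|.-1 * #|t|.-2 = 6 by rewrite t3.
rewrite -card_distinct_triples; apply/subset_leq_card/subsetP => -[[a b] c].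
rewrite inE /= => /and3P [a_in b_in c_in].
have adj_t x y : x \in t -> y \in t -> x != y -> adj G x y.
  by move=> x_in y_in; apply: implyP (forall_inP (t_adj x x_in) y y_in).
rewrite !inE /vertices /= (set3_distinct t3 a_in b_in c_in) eqxx andbT.
case/setD1P: b_in => ba b_t; case/setD1P: c_in => cb /setD1P [ca c_t].
by rewrite !adj_t // eq_sym.
Qed.

Lemma adj_triples_le_sum_common_nbrs : #|adj_triples| <= \sum_g #|common_nbrs G g|.
Proof.
pose F (p : ('I_n * 'I_d) * 'I_n) := (p.1.1, (G p.1).1, p.2).
under eq_bigr do rewrite -cardsE -sum1dep_card.
rewrite (pair_big_dep xpredT (fun g w => w \in common_nbrs G g) (fun _ _ => 1)).
rewrite sum1dep_card; apply: leq_trans (leq_imset_card F _); apply/subset_leq_card.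
apply/subsetP => -[[a b] w]; rewrite inE /= => /and3P [/existsP [k /eqP ab] wa wb].
by apply/imsetP; exists ((a, k), w); rewrite /F /= ?ab // inE /= inE ab wa wb.
Qed.

Lemma sum_weight_phi_act_ge :
  3 * num_triangles G * #|{perm 'I_n}| <= d.+1 * \sum_s weight (phi (act_config G s)).
Proof.
have per_edge g : #|common_nbrs G g| * #|{perm 'I_n}| <= d.+1 * #|common_nbr_first g|.
  by rewrite -card_common_nbr_first [d.+1 * _]mulnC leq_mul2l ltnS card_common_nbrs_lt orbT.
rewrite -(@leq_pmul2l 2) // [in X in _ <= X]mulnCA sum_weight_phi_act big_distrr /=.
apply: (@leq_trans ((\sum_g #|common_nbrs G g|) * #|{perm 'I_n}|)); last first.
  by rewrite big_distrl; apply: leq_sum => g _; apply: per_edge.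
rewrite !mulnA leq_mul2r; apply/orP; right.
exact: leq_trans triangles_le_adj_triples adj_triples_le_sum_common_nbrs.
Qed.

End RelabelledTriangles.

Local Open Scope ring_scope.

Lemma Tc_Tmax (R : realFieldType) (c : R) n d :
  Tc c n d * (d%:R + 1) = 3 * (c * Tmax n d).
Proof.
have bin2E : ('C(d, 2))%:R = d%:R * (d%:R - 1) / 2 :> R.
  have : ('C(d, 2) * 2 = d * d.-1)%N by rewrite mulnC -(mul_bin_diag d 1) bin1.
  have two_neq0 : 2 != 0 :> R by rewrite pnatr_eq0.
  move/(congr1 (fun m => m%:R : R)); rewrite !natrM => /(canRL (mulfK two_neq0)) ->.
  by case: d => [|d]; rewrite ?mul0r //= -natr1 addrK.
have d1_neq0 : d%:R + 1 != 0 :> R by rewrite natr1 pnatr_eq0.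
rewrite /Tc /Tmax bin2E natrM; field.
by rewrite d1_neq0.
Qed.

Lemma mean_weight_ge (R : realFieldType) (c : R) n d (G : config n d) :
  involutive G -> (forall h, (G h).1 != h.1) -> c * Tmax n d <= (num_triangles G)%:R ->
  #|{perm 'I_n}|%:R * Tc c n d <= \sum_s (weight (phi (act_config G s)))%:R.
Proof.
move=> G_invol G_loopless T_ge.
have d1_gt0 : 0 < d%:R + 1 :> R by rewrite natr1 ltr0n.
rewrite -(ler_pM2r d1_gt0) -mulrA Tc_Tmax -natr_sum natr1 -natrM mulnC.
apply: le_trans (_ : #|{perm 'I_n}|%:R * (3 * (num_triangles G)%:R) <= _).
  by rewrite ler_wpM2l ?ler0n // ler_wpM2l.
rewrite -!natrM ler_nat mulnC; exact: sum_weight_phi_act_ge.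
Qed.

Theorem lemma2 (R : realFieldType) (c : R) (n d : nat)
  (hc0 : 0 < c) (hc1 : c < 1) (hdn : ~~ odd (d * n)%N)
  (G : config n d) (hG : in_Gstar c G) :
  (2%:R / (d * n)%N%:R * (#|orbit_config G|)%:R : R) <=
  (#|[set H in orbit_config G | Tc c n d - 1 <= (weight (phi H))%:R]|)%:R.
Proof.
case/andP: hG => /valid_configP [G_invol G_loopless] T_ge.
set good := fun H : config n d => Tc c n d - 1 <= (weight (phi H))%:R.
set stab := #|('C_[set: {perm 'I_n}][G | config_action n d])%g|.
have card_good : #|[set s | good (act_config G s)]| =
    (#|[set H in orbit_config G | good H]| * stab)%N.
  rewrite orbit_configE -(card_act_pred (config_action n d) G (subxx _) good).
  by apply: eq_card => s; rewrite !inE.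
have card_perm : #|{perm 'I_n}| = (#|orbit_config G| * stab)%N.
  by rewrite orbit_configE card_orbit_stab cardsT.
have [dn0 | dn_gt0] := posnP (d * n); first by rewrite dn0 invr0 mulr0 mul0r ler0n.
have M_ge1 : 1 <= (d * n)%:R / 2 :> R.
  have : (2 <= d * n)%N by move: hdn dn_gt0; case: (d * n)%N => [|[|]].
  by rewrite ler_pdivlMr ?ltr0n // mul1r ler_nat.
pose w s : R := (weight (phi (act_config G s)))%:R.
have w_bnd s : 0 <= w s <= (d * n)%:R / 2.
  rewrite ler0n ler_pdivlMr ?ltr0n // -natrM ler_nat mulnC [(d * n)%N]mulnC.
  exact: weight_phi_le (act_config_invol s G_invol).
have := reverse_markov M_ge1 w_bnd (mean_weight_ge G_invol G_loopless T_ge).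
rewrite card_good card_perm !natrM mulrA ler_pM2r ?ltr0n ?cardG_gt0 // => orbit_le.
by rewrite mulrAC ler_pdivrMr ?ltr0n //; lra.
Qed.
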